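(* Let $P$ be a finite lattice and $f\in\mathcal{L}_P$, and let $\mathcal{W}_f=\{w\in\mathcal{L}_P: w\le f,\ w\text{ prime}\}=\{w_1,\dots,w_m\}$. Then $f=w_1+\cdots+w_m$.
   Context: $P$ is a finite lattice. $\mathcal{L}_P$ is the set of maps $f:P\to P$ satisfying (A.1) $a\le f(a)$; (A.2) $a\le b\Rightarrow f(a)\le f(b)$; (A.3) $f(f(a))=f(a)$, ordered pointwise; it is a lattice with join $+$. $\Phi f=\{a:f(a)=a\}$. $f$ is prime if $P\setminus\Phi f$ is closed under $\wedge$. *)

From HB Require Import structures.
From mathcomp Require Import all_boot all_order.
Set Implicit Arguments. Unset Strict Implicit. Unset Printing Implicit Defensive.
Import Order.TTheory.
Local Open Scope order_scope.

Section Closure.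
Context {d : Order.disp_t} {P : finLatticeType d}.

Definition in_LP (f : P -> P) : Prop :=
  [/\ (forall a, a <= f a),
      (forall a b, a <= b -> f a <= f b) &
      (forall a, f (f a) = f a)].

Definition LP_le (f g : P -> P) : Prop := forall a, f a <= g a.

Definition Phi (f : P -> P) : pred P := fun a => f a == a.

Definition prime_op (f : P -> P) : Prop :=
  forall a b, ~~ Phi f a -> ~~ Phi f b -> ~~ Phi f (a `&` b).

Definition W (f : P -> P) (w : P -> P) : Prop :=
  in_LP w /\ LP_le w f /\ prime_op w.

Definition is_join_LP (S : (P -> P) -> Prop) (f : P -> P) : Prop :=
  [/\ in_LP f,
      (forall w, S w -> LP_le w f) &
      (forall g, in_LP g -> (forall w, S w -> LP_le w g) -> LP_le f g)].
End Closure.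

(* For each a in P, the operator w_a sending x to x `|` f a when a <= x, and
   fixing x otherwise, is a prime closure operator below f with w_a a = f a:
   its non-fixed points are the x above a but not above f a, a set clearly
   closed under meets.  Any upper bound g of W f in L_P therefore satisfies
   f a = w_a a <= g a for every a, so f is the least upper bound. *)

From HB Require Import structures.
From mathcomp Require Import all_boot all_order.
Import Order.TTheory.
Local Open Scope order_scope.

Section PrincipalClosure.
Context {d : Order.disp_t} {P : latticeType d}.
Variables a b : P.

Definition principal_closure (x : P) : P := if a <= x then x `|` b else x.

Lemma principal_closure_ext x : x <= principal_closure x.
Proof. by rewrite /principal_closure; case: ifP => // _; apply: leUl. Qed.

Lemma principal_closure_mono x y : x <= y -> principal_closure x <= principal_closure y.
Proof.
move=> lexy; rewrite /principal_closure.
have [ax|nax] := boolP (a <= x); first by rewrite (le_trans ax lexy) leU2.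
by case: ifP => _ //; apply: le_trans lexy (leUl _ _).
Qed.

Lemma principal_closure_idem x : principal_closure (principal_closure x) = principal_closure x.
Proof.
rewrite /principal_closure; have [ax|nax] := boolP (a <= x); last by rewrite (negbTE nax).
by rewrite (le_trans ax (leUl x b)) -joinA joinxx.
Qed.

Lemma principal_closure_fixed x : (principal_closure x == x) = (a <= x) ==> (b <= x).
Proof.
rewrite /principal_closure; case: ifP => _ /=; first by rewrite eq_joinl.
by rewrite eqxx.
Qed.

Lemma principal_closure_at : principal_closure a = a `|` b.
Proof. by rewrite /principal_closure lexx. Qed.

End PrincipalClosure.

Section PrincipalClosureInLP.
Context {d : Order.disp_t} {P : finLatticeType d}.

Lemma in_LP_principal_closure (a b : P) : in_LP (principal_closure a b).
Proof.
split; [exact: principal_closure_ext | exact: principal_closure_mono |].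
exact: principal_closure_idem.
Qed.

Lemma prime_op_principal_closure (a b : P) : prime_op (principal_closure a b).
Proof.
move=> x y; rewrite /Phi !principal_closure_fixed !negb_imply => /andP[ax nbx].
move=> /andP[ay _]; rewrite lexI ax ay /=; apply: contra nbx => bxy.
exact: le_trans bxy (leIl _ _).
Qed.

Lemma principal_closure_le_LP (f : P -> P) (a : P) :
  in_LP f -> LP_le (principal_closure a (f a)) f.
Proof.
case=> ext mon _ x; rewrite /principal_closure; case: ifP => ax //.
by rewrite leUx ext mon.
Qed.

End PrincipalClosureInLP.

Theorem mainTheorem14 (d : Order.disp_t) (P : finLatticeType d) (f : P -> P)
  (hf : in_LP f) : is_join_LP (W f) f.
Proof.
split=> [||g _ ub_g a] //; first by move=> w [_ []].
have Wwa : W f (principal_closure a (f a)).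
  split; first exact: in_LP_principal_closure.
  by split; [exact: principal_closure_le_LP | exact: prime_op_principal_closure].
have := ub_g _ Wwa a; rewrite principal_closure_at join_r //.
by case: hf.
Qed.
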